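(* Let $1\le p<\infty$ and let $n,m\ge 0$ be integers with $n-m\ge 3$ and $n-m\equiv 1\pmod 2$. Then $$\left[\sum_{i=0}^{\frac{n-m-3}{2}}\binom{n}{i}^p+\binom{n}{\frac{n-m-1}{2}}^p+\frac12\sum_{j=0}^{m}\left(\left[\binom{m}{j}+\binom{n}{\frac{n-m+2j-1}{2}}\right]^p+\left[\binom{m}{j}+\binom{n}{\frac{n-m+2j+1}{2}}\right]^p\right)\right]^{1/p} \le \Big[\sum_{j=0}^{m}\binom{m}{j}^p\Big]^{1/p}+\Big[\sum_{j=0}^{n}\binom{n}{j}^p\Big]^{1/p}.$$
   Context: Binomial coefficients have their usual meaning. *)

From Stdlib Require Import Reals Lra Lia.
Open Scope R_scope.

(* sum_{i=a}^{b} f i over naturals (empty, i.e. 0, if b < a) *)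
Fixpoint sumR (f : nat -> R) (a len : nat) : R :=
  match len with
  | O => 0
  | S l => f a + sumR f (S a) l
  end.
Definition sum_range (f : nat -> R) (a b : nat) : R :=
  sumR f a (S b - a)%nat.

From Stdlib Require Import Reals Lra Lia.
From HB Require structures.
From mathcomp Require all_boot all_order all_algebra.
From mathcomp Require all_classical all_reals all_analysis.
From mathcomp Require Rstruct Rstruct_topology.
Open Scope R_scope.

(* Write n - m = 2k + 1, a_j = C(m,j), b_i = C(n,i).  The
   left-hand side is L^(1/p) with
     L = sum_{i<k} b_i^p + b_k^p
         + 1/2 sum_{j<=m} ((a_j + b_(k+j))^p + (a_j + b_(k+1+j))^p),
   a weighted sum of p-th powers of sums x + y (with x = 0 in the first two
   groups).  The a-parts carry total weight sum_j a_j^p = S_a, and the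
   b-parts carry S_b' = sum_{i<k} b_i^p + b_k^p
                        + 1/2 sum_j (b_(k+j)^p + b_(k+1+j)^p).
   1. (Two-term splitting, from convexity of t |-> t^p.)  For A, B > 0 there
      are weights cA, cB >= 1 with cA A^p + cB B^p = (A+B)^p and
      (x+y)^p <= cA x^p + cB y^p for all x, y > 0.  Summing with
      A = S_a^(1/p), B = S_b'^(1/p) gives L <= (A+B)^p: a weighted Minkowski
      inequality.
   2. (Redistribution.)  Since b is symmetric, b_(k+m+1) = b_(n-k-m-1) = b_k,
      and halving the pairs only redistributes mass: S_b' <= sum_i b_i^p.
   The theorem follows from 1, 2 and monotonicity of t |-> t^(1/p). *)

(* Convexity of t |-> t^p on (0, +oo) for p >= 1, taken from the real
   analysis library, where powR coincides with Rpower on positive reals. *)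
Module PowerConvexity.
Import HB.structures.
Import mathcomp.boot.all_boot mathcomp.order.all_order mathcomp.algebra.all_algebra.
Import mathcomp.classical.all_classical mathcomp.reals.all_reals.
Import mathcomp.analysis.all_analysis.
Import mathcomp.reals_stdlib.Rstruct mathcomp.analysis_stdlib.Rstruct_topology.
Import Order.TTheory GRing.Theory Num.Theory.
Open Scope R_scope.

Lemma Rpower_powR (x y : R) : Rlt 0 x -> Rpower x y = powR x y.
Proof.
move=> x0; rewrite /Rpower /powR.
have -> : (x == @GRing.zero R) = false.
  apply/eqP => x_eq0.
  have x_eq0' : x = 0 by exact: x_eq0.
  by rewrite x_eq0' in x0; lra.
by rewrite RexpE RlnE.
Qed.

Lemma Rpower_convex (p x y t : R) : Rle 1 p -> Rlt 0 x -> Rlt 0 y ->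
  Rle 0 t -> Rle t 1 ->
  Rpower (t * x + (1 - t) * y) p <= t * Rpower x p + (1 - t) * Rpower y p.
Proof.
move=> p1 x0 y0 t0 t1.
have mid_pos : 0 < t * x + (1 - t) * y by nra.
have hp : (@GRing.one R <= p)%O by apply/RleP.
have hx : (@GRing.zero R <= x)%O by apply/RleP; change (0 <= x); lra.
have hy : (@GRing.zero R <= y)%O by apply/RleP; change (0 <= y); lra.
have ht0 : (@GRing.zero R <= t)%O by apply/RleP.
have ht1 : (t <= @GRing.one R)%O by apply/RleP.
rewrite !Rpower_powR //.
have := convex_powR hp (Itv01 ht0 ht1) (x := x) (y := y).
rewrite !inE /= !in_itv /= !andbT => /(_ hx hy) /RleP.
by rewrite !convRE.
Qed.
End PowerConvexity.

Definition Rpower_convex := PowerConvexity.Rpower_convex.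

Lemma Rpower_pos (x y : R) : 0 < Rpower x y.
Proof. unfold Rpower; apply exp_pos. Qed.

Lemma Rpower_nonneg (x y : R) : 0 <= Rpower x y.
Proof. apply Rlt_le, Rpower_pos. Qed.

Lemma Rpower_div (x y p : R) : 0 < x -> 0 < y ->
  Rpower (x / y) p = Rpower x p / Rpower y p.
Proof.
  intros Hx Hy. unfold Rdiv.
  rewrite <- Rpower_mult_distr by (try apply Rinv_0_lt_compat; lra).
  unfold Rpower at 2. rewrite ln_Rinv by exact Hy.
  replace (p * - ln y) with (- (p * ln y)) by ring.
  now rewrite exp_Ropp.
Qed.

Lemma Rpower_inv_exp_pow (x p : R) : 1 <= p -> 0 < x -> Rpower (Rpower x (/ p)) p = x.
Proof.
  intros. rewrite Rpower_mult. replace (/ p * p) with 1 by (field; lra).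
  now apply Rpower_1.
Qed.

Lemma Rpower_pow_inv_exp (x p : R) : 1 <= p -> 0 < x -> Rpower (Rpower x p) (/ p) = x.
Proof.
  intros. rewrite Rpower_mult. replace (p * / p) with 1 by (field; lra).
  now apply Rpower_1.
Qed.

(* Weight given to the part A of a total S = A + B when (A+B)^p is split
   proportionally: split_weight p A S * A^p = S^p * (A / S). *)
Definition split_weight (p A S : R) : R := Rpower S p * (A / S) / Rpower A p.

Section TwoTermSplitting.
Variables (p A B : R).
Hypotheses (Hp : 1 <= p) (HA : 0 < A) (HB : 0 < B).

Lemma split_weights_sum :
  split_weight p A (A + B) * Rpower A p + split_weight p B (A + B) * Rpower B p
  = Rpower (A + B) p.
Proof.
  unfold split_weight.
  pose proof (Rpower_pos A p). pose proof (Rpower_pos B p).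
  field. repeat split; lra.
Qed.

(* A part never weighs less than 1: A^(p-1) <= (A+B)^(p-1). *)
Lemma split_weight_ge1 : 1 <= split_weight p B (A + B).
Proof.
  assert (Hpow : forall x, 0 < x -> Rpower x p = x * Rpower x (p - 1)).
  { intros x Hx. replace p with (1 + (p - 1)) at 1 by ring.
    now rewrite Rpower_plus, Rpower_1. }
  assert (Hmono : Rpower B (p - 1) <= Rpower (A + B) (p - 1))
    by (apply Rle_Rpower_l; lra).
  pose proof (Rpower_pos B (p - 1)).
  unfold split_weight. rewrite !Hpow by lra.
  replace ((A + B) * Rpower (A + B) (p - 1) * (B / (A + B)) / (B * Rpower B (p - 1)))
    with (Rpower (A + B) (p - 1) / Rpower B (p - 1)) by (field; lra).
  apply Rmult_le_reg_r with (Rpower B (p - 1)); [lra|].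
  unfold Rdiv. rewrite Rmult_assoc, Rinv_l, Rmult_1_r; lra.
Qed.

Lemma Rpower_sum_split (x y : R) : 0 < x -> 0 < y ->
  Rpower (x + y) p
  <= split_weight p A (A + B) * Rpower x p + split_weight p B (A + B) * Rpower y p.
Proof.
  intros Hx Hy.
  set (lam := A / (A + B)).
  assert (Hlam : 0 <= lam <= 1).
  { unfold lam; split; [apply Rlt_le, Rdiv_lt_0_compat; lra|].
    apply Rmult_le_reg_r with (A + B); [lra|]. field_simplify; lra. }
  assert (Hxy : x + y = (A + B) * (lam * (x / A) + (1 - lam) * (y / B)))
    by (unfold lam; field; lra).
  assert (Hxa : 0 < x / A) by (apply Rdiv_lt_0_compat; lra).
  assert (Hyb : 0 < y / B) by (apply Rdiv_lt_0_compat; lra).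
  rewrite Hxy, <- Rpower_mult_distr by nra.
  eapply Rle_trans.
  { apply Rmult_le_compat_l; [apply Rpower_nonneg|].
    now apply Rpower_convex. }
  rewrite !Rpower_div by lra.
  pose proof (Rpower_pos A p). pose proof (Rpower_pos B p).
  unfold split_weight, lam. right. field. repeat split; lra.
Qed.

End TwoTermSplitting.

Lemma sumR_ext (f g : nat -> R) (a l : nat) :
  (forall i, f i = g i) -> sumR f a l = sumR g a l.
Proof. intro H. revert a; induction l; intro a; simpl; congruence. Qed.

Lemma sumR_le (f g : nat -> R) (a l : nat) :
  (forall i, f i <= g i) -> sumR f a l <= sumR g a l.
Proof.
  intro H. revert a; induction l; intro a; simpl; [lra|].
  specialize (IHl (S a)); specialize (H a); lra.
Qed.

Lemma sumR_nonneg (f : nat -> R) (a l : nat) :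
  (forall i, 0 <= f i) -> 0 <= sumR f a l.
Proof.
  intro H. revert a; induction l; intro a; simpl; [lra|].
  specialize (IHl (S a)); specialize (H a); lra.
Qed.

Lemma sumR_plus (f g : nat -> R) (a l : nat) :
  sumR (fun i => f i + g i) a l = sumR f a l + sumR g a l.
Proof. revert a; induction l; intro a; simpl; [lra|rewrite IHl; lra]. Qed.

Lemma sumR_scal (f : nat -> R) (c : R) (a l : nat) :
  sumR (fun i => c * f i) a l = c * sumR f a l.
Proof. revert a; induction l; intro a; simpl; [lra|rewrite IHl; lra]. Qed.

Lemma sumR_app (f : nat -> R) (a l1 l2 : nat) :
  sumR f a (l1 + l2) = sumR f a l1 + sumR f (a + l1) l2.
Proof.
  revert a; induction l1; intro a; simpl.
  - rewrite Nat.add_0_r; lra.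
  - rewrite IHl1, Nat.add_succ_r; simpl; lra.
Qed.

Lemma sumR_last (f : nat -> R) (a l : nat) :
  sumR f a (S l) = sumR f a l + f (a + l)%nat.
Proof. rewrite <- Nat.add_1_r, sumR_app. simpl. lra. Qed.

Lemma sumR_shift (f : nat -> R) (c a l : nat) :
  sumR (fun j => f (c + j)%nat) a l = sumR f (c + a) l.
Proof.
  revert a; induction l; intro a; simpl; [reflexivity|].
  now rewrite IHl, Nat.add_succ_r.
Qed.

Lemma sumR_le_combination (f g h : nat -> R) (c d : R) (a l : nat) :
  (forall i, f i <= c * g i + d * h i) ->
  sumR f a l <= c * sumR g a l + d * sumR h a l.
Proof.
  intro H. rewrite <- !sumR_scal, <- sumR_plus. now apply sumR_le.
Qed.

Lemma head_half_sum_pos (f g : nat -> R) (x : R) (k l : nat) :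
  (forall i, 0 <= f i) -> 0 < x -> (forall j, 0 <= g j) ->
  0 < sumR f 0 k + x + / 2 * sumR g 0 l.
Proof.
  intros Hf Hx Hg.
  pose proof (sumR_nonneg f 0 k Hf). pose proof (sumR_nonneg g 0 l Hg). lra.
Qed.

(* The two power sums built from positive sequences a (length m+1) and b:
   the mixed sum L of the theorem, and its b-part S_b'. *)
Definition mixed_sum (p : R) (a b : nat -> R) (k m : nat) : R :=
  sumR (fun i => Rpower (b i) p) 0 k + Rpower (b k) p
  + / 2 * sumR (fun j => Rpower (a j + b (k + j)%nat) p
                       + Rpower (a j + b (S k + j)%nat) p) 0 (S m).

Definition split_sum (p : R) (b : nat -> R) (k m : nat) : R :=
  sumR (fun i => Rpower (b i) p) 0 k + Rpower (b k) p
  + / 2 * sumR (fun j => Rpower (b (k + j)%nat) p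
                       + Rpower (b (S k + j)%nat) p) 0 (S m).

Section WeightedMinkowski.
Variables (p : R) (a b : nat -> R) (k m : nat).
Hypotheses (Hp : 1 <= p) (Ha : forall j, 0 < a j) (Hb : forall i, 0 < b i).

Let Sa : R := sumR (fun j => Rpower (a j) p) 0 (S m).

Lemma power_sum_pos : 0 < Sa.
Proof.
  unfold Sa; simpl. pose proof (Rpower_pos (a 0%nat) p).
  pose proof (sumR_nonneg _ 1 m (fun j => Rpower_nonneg (a j) p)). lra.
Qed.

Lemma split_sum_pos : 0 < split_sum p b k m.
Proof.
  apply head_half_sum_pos; [intro; apply Rpower_nonneg | apply Rpower_pos |].
  intro; apply Rplus_le_le_0_compat; apply Rpower_nonneg.
Qed.

Lemma mixed_sum_pos : 0 < mixed_sum p a b k m.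
Proof.
  apply head_half_sum_pos; [intro; apply Rpower_nonneg | apply Rpower_pos |].
  intro; apply Rplus_le_le_0_compat; apply Rpower_nonneg.
Qed.

Lemma mixed_sum_minkowski :
  Rpower (mixed_sum p a b k m) (/ p)
  <= Rpower Sa (/ p) + Rpower (split_sum p b k m) (/ p).
Proof.
  pose proof power_sum_pos as HSa. pose proof split_sum_pos as HSb.
  set (A := Rpower Sa (/ p)). set (B := Rpower (split_sum p b k m) (/ p)).
  assert (HA : 0 < A) by apply Rpower_pos.
  assert (HB : 0 < B) by apply Rpower_pos.
  set (cA := split_weight p A (A + B)). set (cB := split_weight p B (A + B)).
  assert (HcB : 1 <= cB) by (now apply split_weight_ge1).
  assert (Hbound : mixed_sum p a b k m <= cA * Sa + cB * split_sum p b k m).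
  { unfold mixed_sum, split_sum.
    pose proof (Rpower_pos (b k) p) as Hpeak.
    pose proof (sumR_nonneg _ 0 k (fun i => Rpower_nonneg (b i) p)) as Hhead.
    assert (Hpairs :
      sumR (fun j => Rpower (a j + b (k + j)%nat) p
                   + Rpower (a j + b (S k + j)%nat) p) 0 (S m)
      <= cA * sumR (fun j => 2 * Rpower (a j) p) 0 (S m)
       + cB * sumR (fun j => Rpower (b (k + j)%nat) p
                           + Rpower (b (S k + j)%nat) p) 0 (S m)).
    { apply sumR_le_combination. intro j.
      pose proof (Rpower_sum_split p A B Hp HA HB _ _ (Ha j) (Hb (k + j)%nat))
        as Hlow.
      pose proof (Rpower_sum_split p A B Hp HA HB _ _ (Ha j) (Hb (S k + j)%nat))
        as Hhigh.
      fold cA cB in Hlow, Hhigh. lra. }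
    rewrite sumR_scal in Hpairs. fold Sa in Hpairs. nra. }
  assert (Hrecombine : cA * Sa + cB * split_sum p b k m = Rpower (A + B) p).
  { unfold cA, cB. rewrite <- split_weights_sum by assumption.
    unfold A, B. now rewrite !Rpower_inv_exp_pow. }
  rewrite <- (Rpower_pow_inv_exp (A + B) p) by lra.
  apply Rle_Rpower_l; [apply Rlt_le, Rinv_0_lt_compat; lra|].
  split; [apply mixed_sum_pos | lra].
Qed.

End WeightedMinkowski.

Lemma pair_average_sum (f : nat -> R) (k m : nat) :
  / 2 * sumR (fun j => f (k + j)%nat + f (S k + j)%nat) 0 (S m)
  = / 2 * f k + sumR f (S k) m + / 2 * f (S k + m)%nat.
Proof.
  rewrite sumR_plus, !sumR_shift, !Nat.add_0_r.
  replace (sumR f k (S m)) with (f k + sumR f (S k) m) by reflexivity.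
  rewrite (sumR_last f (S k)). simpl. lra.
Qed.

Lemma split_mass_le (f : nat -> R) (k m : nat) :
  (forall i, 0 <= f i) -> f (S k + m)%nat = f k ->
  sumR f 0 k + f k + / 2 * sumR (fun j => f (k + j)%nat + f (S k + j)%nat) 0 (S m)
  <= sumR f 0 (S k + m + S k).
Proof.
  intros Hf Hsym. rewrite pair_average_sum, Hsym.
  assert (Hfull : sumR f 0 (S k + m + S k)
    = sumR f 0 k + f k + sumR f (S k) m + f (S k + m)%nat
      + sumR f (S (S k + m)) k).
  { rewrite !sumR_app, sumR_last. simpl. ring. }
  pose proof (sumR_nonneg f (S (S k + m)) k Hf).
  rewrite Hfull, Hsym. lra.
Qed.

Lemma C_pos (n k : nat) : 0 < C n k.
Proof.
  unfold C. apply Rdiv_lt_0_compat; [apply INR_fact_lt_0|].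
  apply Rmult_lt_0_compat; apply INR_fact_lt_0.
Qed.

Lemma split_sum_binomial_le (p : R) (k m : nat) :
  split_sum p (C (S k + m + k)) k m
  <= sumR (fun i => Rpower (C (S k + m + k) i) p) 0 (S (S k + m + k)).
Proof.
  replace (S (S k + m + k)) with (S k + m + S k)%nat by lia.
  apply (split_mass_le (fun i => Rpower (C (S k + m + k) i) p)).
  - intro i; apply Rpower_nonneg.
  - now rewrite (pascal_step1 _ (S k + m)), Nat.add_sub_swap, Nat.sub_diag
      by lia.
Qed.

Lemma half_of_double (r q : nat) : r = (2 * q)%nat -> (r / 2 = q)%nat.
Proof. intros ->. rewrite Nat.mul_comm. apply Nat.div_mul; lia. Qed.

Theorem mainTheorem20 (p : R) (n m : nat) :
  1 <= p ->
  (3 <= n - m)%nat -> Nat.odd (n - m) = true ->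
  Rpower
    (sum_range (fun i => Rpower (C n i) p) 0 ((n - m - 3) / 2)
     + Rpower (C n ((n - m - 1) / 2)) p
     + / 2 * sum_range (fun j =>
           Rpower (C m j + C n ((n - m + 2 * j - 1) / 2)) p
         + Rpower (C m j + C n ((n - m + 2 * j + 1) / 2)) p) 0 m)
    (/ p)
  <= Rpower (sum_range (fun j => Rpower (C m j) p) 0 m) (/ p)
   + Rpower (sum_range (fun j => Rpower (C n j) p) 0 n) (/ p).
Proof.
  intros Hp H3 Hodd.
  apply Nat.odd_spec in Hodd as [k Hk].
  assert (Hn : n = (S k + m + k)%nat) by lia. subst n.
  unfold sum_range. rewrite !Nat.sub_0_r.
  rewrite (half_of_double _ (k - 1)), (half_of_double _ k) by lia.
  replace (S (k - 1)) with k by lia.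
  erewrite sumR_ext with (l := S m); [| intro j; cbv beta;
    rewrite (half_of_double _ (k + j)), (half_of_double _ (S k + j)) by lia;
    reflexivity].
  eapply Rle_trans.
  - exact (mixed_sum_minkowski p (C m) (C (S k + m + k)) k m Hp
             (C_pos m) (C_pos _)).
  - apply Rplus_le_compat_l, Rle_Rpower_l;
      [apply Rlt_le, Rinv_0_lt_compat; lra|].
    split; [apply split_sum_pos|].
    apply split_sum_binomial_le.
Qed.
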